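(* Let $j$ and $k$ be natural numbers, let $\nu$ be a non-zero real number, and let $q:\mathbb{R}^n\to\mathbb{R}$ be a polynomial with highest total degree $|\beta|$. Set $\lambda = \left\lceil \frac{|\beta|-1}{2j}\right\rceil$. Then $$Q(\mathbf{x}) = \sum_{p=0}^{\lambda} (-1)^p \binom{k+p-1}{p} \nu^{-p-k}\, \Delta^{jp} q(\mathbf{x})$$ satisfies $(\Delta^j + \nu)^k Q(\mathbf{x}) = q(\mathbf{x})$, where $\Delta=\sum_{i=1}^n\partial_{x_i}^2$.
   Context: $\lceil h\rceil$ is the least integer $\ge h$; $\Delta^{r}$ denotes $r$-fold application of the Laplacian, with $\Delta^0$ the identity. *)

From HB Require Import structures.
From mathcomp Require Import all_boot all_order all_algebra.
From mathcomp Require Import reals.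
From mathcomp Require Import mpoly.
Set Implicit Arguments. Unset Strict Implicit. Unset Printing Implicit Defensive.
Import Order.TTheory GRing.Theory Num.Theory.
Local Open Scope ring_scope.

(* Laplacian on polynomials in n real variables: sum_i d^2/dx_i^2
   (formal partial derivatives = usual ones for polynomials). *)
Definition laplacian (R : realType) (n : nat) (p : {mpoly R[n]}) : {mpoly R[n]} :=
  \sum_(i < n) (p^`M(i))^`M(i).

Definition laplacian_pow (R : realType) (n r : nat) (p : {mpoly R[n]}) :=
  iter r (@laplacian R n) p.

(* highest total degree |beta| of q (msize q = 1 + total degree, 0 for q = 0) *)
Definition tdeg (R : realType) (n : nat) (q : {mpoly R[n]}) : nat := (msize q).-1.

Definition lam (R : realType) (n j : nat) (q : {mpoly R[n]}) : int :=
  Num.ceil ((((tdeg q)%:Z - 1)%:~R : R) / (2 * j)%:R).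

Definition Qpoly (R : realType) (n j k : nat) (nu : R) (q : {mpoly R[n]}) : {mpoly R[n]} :=
  \sum_(p < `|lam j q|.+1)
     (((-1) ^+ p * ('C(k + p - 1, p))%:R * nu ^- (p + k)) *: laplacian_pow (j * p) q).

Definition op_pow (R : realType) (n j k : nat) (nu : R) (P : {mpoly R[n]}) :=
  iter k (fun P => laplacian_pow j P + nu *: P) P.

From HB Require Import structures.
From mathcomp Require Import all_boot all_order all_algebra.
From mathcomp Require Import reals.
From mathcomp Require Import mpoly.
From mathcomp Require Import ring zify.
Set Implicit Arguments. Unset Strict Implicit. Unset Printing Implicit Defensive.
Import Order.TTheory GRing.Theory Num.Theory.
Local Open Scope ring_scope.

(* The operator L := Delta^j lowers the total degree by 2j, so it is nilpotent
   on q: L^(lambda+1) q = 0.  For a nilpotent L the inverse of (L + nu)^k is the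
   truncated binomial series nu^-k \sum_p 'C(k+p-1, p) (-L/nu)^p, and peeling off
   one factor L + nu at a time reduces (L + nu)^k Q = q to Pascal's rule for the
   coefficients. *)

Section ResolventPower.
Variables (F : fieldType) (V : lmodType F) (L : {linear V -> V}) (nu : F).
Hypothesis nu_neq0 : nu != 0.

Definition resolvent_coef (k p : nat) : F :=
  (-1) ^+ p * 'C(k + p - 1, p)%:R * nu ^- (p + k).

Definition resolvent_sum (N k : nat) (f : V) : V :=
  \sum_(p < N.+1) resolvent_coef k p *: iter p L f.

Lemma resolvent_coef0 p : resolvent_coef 0 p = (p == 0)%:R.
Proof.
case: p => [|p]; first by rewrite /resolvent_coef !expr0 bin0 invr1 !mulr1.
by rewrite /resolvent_coef add0n subSS subn0 bin_small // mulr0 mul0r.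
Qed.

Lemma resolvent_coefS0 k : nu * resolvent_coef k.+1 0 = resolvent_coef k 0.
Proof.
rewrite /resolvent_coef !add0n !addn0 !bin0 !mulr1 !expr0 exprS.
by field; rewrite expf_neq0.
Qed.

Lemma resolvent_coefSS k p :
  resolvent_coef k.+1 p + nu * resolvent_coef k.+1 p.+1 = resolvent_coef k p.+1.
Proof.
rewrite /resolvent_coef !addSn !addnS !subSS !subn0 binS natrD !exprS.
by field; rewrite expf_neq0.
Qed.

Lemma resolvent_sum0 N f : resolvent_sum N 0 f = f.
Proof.
rewrite /resolvent_sum big_ord_recl big1 => [|p _]; last first.
  by rewrite resolvent_coef0 scale0r.
by rewrite resolvent_coef0 scale1r addr0.
Qed.

Lemma resolvent_sumS N k f : iter N.+1 L f = 0 ->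
  L (resolvent_sum N k.+1 f) + nu *: resolvent_sum N k.+1 f = resolvent_sum N k f.
Proof.
move=> LNf0; rewrite /resolvent_sum linear_sum scaler_sumr big_ord_recr /= linearZ /=.
rewrite -iterS LNf0 scaler0 addr0 big_ord_recl [in RHS]big_ord_recl /=.
rewrite scalerA resolvent_coefS0 addrCA -big_split /=; congr (_ + _).
by apply: eq_bigr => p _; rewrite linearZ /= !scalerA -scalerDl resolvent_coefSS.
Qed.

Lemma resolvent_sumK N k f : iter N.+1 L f = 0 ->
  iter k (fun v => L v + nu *: v) (resolvent_sum N k f) = f.
Proof.
move=> LNf0; elim: k => [|k IHk]; first exact: resolvent_sum0.
by rewrite iterSr resolvent_sumS // IHk.
Qed.

End ResolventPower.

Section Laplacian.
Variables (R : realType) (n : nat).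
Implicit Types (p : {mpoly R[n]}) (i : 'I_n).

Lemma laplacian_is_linear : linear (@laplacian R n).
Proof.
move=> c p1 p2; rewrite /laplacian scaler_sumr -big_split /=.
by apply: eq_bigr => i _; rewrite !linearP.
Qed.

HB.instance Definition _ := GRing.isLinear.Build R {mpoly R[n]} {mpoly R[n]} _
  (@laplacian R n) laplacian_is_linear.

Lemma laplacian_pow_is_linear r : linear (@laplacian_pow R n r).
Proof.
by move=> c p1 p2; rewrite /laplacian_pow; elim: r => //= r ->; rewrite linearP.
Qed.

HB.instance Definition _ r := GRing.isLinear.Build R {mpoly R[n]} {mpoly R[n]} _
  (@laplacian_pow R n r) (laplacian_pow_is_linear r).

Lemma laplacian_powM r s p :
  laplacian_pow (r * s) p = iter s (@laplacian_pow R n r) p.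
Proof. by rewrite /laplacian_pow mulnC iterM. Qed.

Lemma msize_mderiv i p : (msize p^`M(i) <= (msize p).-1)%N.
Proof.
rewrite msizeE; apply/bigmax_leqP_seq => m m_supp _.
have : p@_(m + U_(i)) != 0.
  by apply: contraTneq m_supp => p_m0; rewrite mcoeff_msupp mcoeff_deriv p_m0 mul0rn eqxx.
rewrite -mcoeff_msupp => /msize_mdeg_lt; rewrite mdegD mdeg1 addn1.
by case: (msize p).
Qed.

Lemma msize_laplacian p : (msize (laplacian p) <= (msize p).-2)%N.
Proof.
apply: leq_trans (mmeasure_sum _ _ _ _) _; apply/bigmax_leqP => i _.
apply: leq_trans (msize_mderiv _ _) _.
by rewrite -[(msize p).-2]subn1 -subn1 leq_sub2r // msize_mderiv.
Qed.

Lemma msize_laplacian_pow r p : (msize (laplacian_pow r p) <= msize p - 2 * r)%N.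
Proof.
elim: r => [|r IHr]; first by rewrite subn0.
apply: leq_trans (msize_laplacian _) _.
by rewrite -subn2 mulnS addnC subnDA leq_sub2r.
Qed.

Lemma laplacian_pow_eq0 r p : (msize p <= 2 * r)%N -> laplacian_pow r p = 0.
Proof.
move=> le_p; apply/eqP; rewrite -msize_poly_eq0 -leqn0.
by apply: leq_trans (msize_laplacian_pow r p) _; rewrite leqn0 subn_eq0.
Qed.

End Laplacian.

Lemma msize_leq_lam (R : realType) (n j : nat) (q : {mpoly R[n]}) : (0 < j)%N ->
  (msize q <= 2 * (j * `|lam j q|.+1))%N.
Proof.
move=> j_gt0.
have lam_ge : ((tdeg q)%:Z - 1 <= lam j q * (2 * j)%:Z)%R.
  rewrite -(ler_int R) intrM -ler_pdivrMr ?ltr0n ?muln_gt0 //; exact: ceil_ge.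
rewrite /tdeg in lam_ge; case: (msize q) lam_ge => [|t] /= lam_ge; first by [].
nia.
Qed.

Theorem corollary5p4 (R : realType) (n j k : nat) (nu : R) (q : {mpoly R[n]}) :
  (0 < j)%N -> nu != 0 ->
  forall x : 'I_n -> R,
    (op_pow j k nu (Qpoly j k nu q)).@[x] = q.@[x].
Proof.
move=> j_gt0 nu_neq0 x.
have nilpotent : iter `|lam j q|.+1 (laplacian_pow j) q = 0.
  by rewrite -laplacian_powM laplacian_pow_eq0 // msize_leq_lam.
have -> : Qpoly j k nu q = resolvent_sum (laplacian_pow j) nu `|lam j q| k q.
  by apply: eq_bigr => p _; rewrite laplacian_powM.
by rewrite /op_pow resolvent_sumK.
Qed.
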